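(* Let $K,D,U$ be integers with $0\le U\le D$ and $U+D\le K-2$, and suppose $\gcd(K,D-U,U+1)=\gcd(K-D+U,U+1)$. Consider the two-sided single unicast index coding problem with $K$ messages and $K$ receivers, receiver $R_k$ wanting $x_k$ and having side-information $\{x_{k-U},\dots,x_{k-1}\}\cup\{x_{k+1},\dots,x_{k+D}\}$ (indices modulo $K$). Let $u_a=\frac{U+1}{\gcd(K,D-U,U+1)}$. Then no $p$-dimensional vector linear index code with $1\le p<u_a$ for this problem is of optimal length; i.e., the $u_a$-dimensional optimal length vector linear index codes for this problem are of minimal dimension.
   Context: A $p$-dimensional vector linear index code of length $N$ encodes the $pK$ message symbols (each $x_k\in\mathbb{F}_q^p$) linearly into $N$ broadcast symbols from which each receiver decodes its wanted message using its side-information; its rate is $p/N$. For this problem (with $U+D\le K-2$) the symmetric capacity is $\frac{U+1}{K-D+U}$, and a code is of optimal length if its rate equals the capacity. *)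

From HB Require Import structures.
From mathcomp Require Import all_boot all_order all_algebra.
Set Implicit Arguments. Unset Strict Implicit. Unset Printing Implicit Defensive.
Import GRing.Theory.
Local Open Scope ring_scope.

Definition side_info (K D U : nat) (k j : 'I_K) : bool :=
  [exists t : 'I_U.+1, (0 < (t : nat))%N && ((j + t) %% K == k)%N]
  || [exists t : 'I_D.+1, (0 < (t : nat))%N && ((j : nat) == (k + t) %% K)%N].

(* A p-dimensional vector linear index code of length N over F is given by a
   linear encoding map F^{pK} -> F^N, represented by one p x N block per
   message: the broadcast codeword is  \sum_j x_j *m L_j . *)
Definition encode (F : fieldType) (K p N : nat) (L : 'I_K -> 'M[F]_(p, N))
  (x : 'I_K -> 'rV[F]_p) : 'rV[F]_N := \sum_(j < K) x j *m L j.

Definition side_view (F : fieldType) (K D U p : nat) (k : 'I_K)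
  (x : 'I_K -> 'rV[F]_p) : 'I_K -> 'rV[F]_p :=
  fun j => if @side_info K D U k j then x j else 0.

Definition is_index_code (F : fieldType) (K D U p N : nat)
  (L : 'I_K -> 'M[F]_(p, N)) : Prop :=
  forall k : 'I_K, exists dec : 'rV[F]_N -> ('I_K -> 'rV[F]_p) -> 'rV[F]_p,
    forall x : 'I_K -> 'rV[F]_p,
      dec (encode L x) (@side_view F K D U p k x) = x k.

(* Rate p/N equals the symmetric capacity (U+1)/(K-D+U). *)
Definition optimal_length (K D U p N : nat) : Prop :=
  ((p%:R / N%:R : rat) = (U.+1)%:R / (K - D + U)%:R).

Definition u_a (K D U : nat) : nat := (U.+1 %/ gcdn K (gcdn (D - U) U.+1))%N.

From mathcomp Require Import all_boot all_order all_algebra.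
From mathcomp Require Import zify.
Import GRing.Theory Num.Theory.

(* An optimal-length code satisfies p (K - D + U) = (U + 1) N. With
   g = gcd (K - D + U, U + 1), this gives p g = gcd (p (K - D + U), p (U + 1))
   = gcd ((U + 1) N, p (U + 1)), a multiple of U + 1, so (U + 1) / g divides p. *)

Lemma natr_ratio_eqE {R : numFieldType} {p N a b : nat} :
  0 < a -> 0 < b -> (p%:R / N%:R = a%:R / b%:R :> R)%R -> p * b = a * N.
Proof.
move=> a_gt0 b_gt0 ratio.
have N_neq0 : N != 0.
  apply: contra_eqN ratio => /eqP ->; rewrite invr0 mulr0 eq_sym mulf_eq0 invr_eq0.
  by rewrite !pnatr_eq0 negb_or -!lt0n a_gt0 b_gt0.
apply/eqP; rewrite -(eqr_nat R) !natrM -eqr_div ?pnatr_eq0 -?lt0n //.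
  exact/eqP.
by rewrite lt0n.
Qed.

Lemma dvdn_div_gcd_mul {p N a b : nat} :
  0 < a -> p * b = a * N -> a %/ gcdn b a %| p.
Proof.
move=> a_gt0 e; have g_gt0 : 0 < gcdn b a by rewrite gcdn_gt0 a_gt0 orbT.
have a_dvd_pg : a %| p * gcdn b a.
  by rewrite muln_gcdr dvdn_gcd e dvdn_mulr // dvdn_mull.
by rewrite -(dvdn_pmul2r g_gt0) divnK ?dvdn_gcdr.
Qed.

Theorem lemma1 (F : finFieldType) (K D U : nat)
  (hUD : (U <= D)%N) (hK : (U + D <= K - 2)%N) (hK2 : (2 <= K)%N)
  (hgcd : gcdn K (gcdn (D - U) U.+1) = gcdn (K - D + U) U.+1)
  (p N : nat) (hp1 : (1 <= p)%N) (hp : (p < u_a K D U)%N)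
  (L : 'I_K -> 'M[F]_(p, N)) :
  @is_index_code F K D U p N L -> ~ optimal_length K D U p N.
Proof.
move=> _ opt; have M_gt0 : 0 < K - D + U by lia.
have rate := natr_ratio_eqE (ltn0Sn U) M_gt0 opt.
have := dvdn_div_gcd_mul (ltn0Sn U) rate.
rewrite -hgcd -/(u_a K D U) => /(dvdn_leq hp1).
by rewrite leqNgt hp.
Qed.
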